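(* Let $f:\Omega_D\to A$ be a function. If there exists $I\in\mathbb T$ such that \[f(\alpha+\beta J)=\sum_{H\in\mathscr P(\tau)}\gamma_H\,f(\alpha+\overline\beta^H I),\qquad \gamma_H:=2^{-\tau}\sum_{K\in\mathscr P(\tau)}(-1)^{|K\cap H|}J_KI_K^{-1},\] for all $(\alpha,\beta)\in D$ and all $J\in\mathbb T$, then $f$ is a $T$-function.
   Context: $A$ is a finite-dimensional associative real algebra with unit and a $*$-involution $x\mapsto x^c$; $\mathbb S_A=\{x: x+x^c=0, xx^c=1\}\neq\emptyset$. $V\subseteq A$ has a basis $(v_0=1,v_1,\dots,v_N)$, $N\geq1$, with $v_s\in\mathbb S_A$ pairwise anticommuting for $s\ge1$, and $V\subseteq\bigcup_{J\in\mathbb S_A}(\mathbb R+J\mathbb R)$; $A$ carries the Euclidean norm making a completion of this basis orthonormal. $\mathbb R_{\ell,m}=\mathrm{Span}_{\mathbb R}(v_\ell,\dots,v_m)$, $\mathbb S_{\ell,m}$ its unit sphere. $T=(t_0,\dots,t_\tau)$, $0\le t_0<\dots<t_\tau=N$, with torus $\mathbb T=\mathbb S_{t_0+1,t_1}\times\cdots\times\mathbb S_{t_{\tau-1}+1,t_\tau}$ (for $\tau=0$ the single index $J=\emptyset$). For $J\in\mathbb T$, $\beta\in\mathbb R^\tau$: $\beta J=\sum_h\beta_hJ_h$; $\mathscr P(\tau)$ the power set of $\{1,\dots,\tau\}$; $J_\emptyset=1$ and $J_K=J_{k_1}\cdots J_{k_p}$ for $K=\{k_1<\dots<k_p\}$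 (invertible, with inverse $I_K^{-1}$ for $I\in\mathbb T$); $\overline\beta^H$ is $\beta$ with $\beta_h$ replaced by $-\beta_h$ for every $h\in H$, and $\overline\beta^h=\overline\beta^{\{h\}}$. $D\subseteq\mathbb R_{0,t_0}\times\mathbb R^\tau$ is invariant under $(\alpha,\beta)\mapsto(\alpha,\overline\beta^h)$ for every $h$, and $\Omega_D=\{\alpha+\beta J:(\alpha,\beta)\in D,J\in\mathbb T\}$. A $T$-stem function is $F=\sum_{K}E_KF_K:D\to A\otimes\mathbb R^{2^\tau}$ ($E_K$ canonical basis of $\mathbb R^{2^\tau}$) with $F_K(\alpha,\overline\beta^h)=F_K(\alpha,\beta)$ if $h\notin K$ and $=-F_K(\alpha,\beta)$ if $h\in K$. A $T$-function is a function $\Omega_D\to A$ of the form $\alpha+\beta J\mapsto\sum_KJ_KF_K(\alpha,\beta)$ for some $T$-stem function $F$. *)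

From HB Require Import structures.
From mathcomp Require Import all_boot all_order all_algebra all_field.
From mathcomp Require Import reals.

Set Implicit Arguments.
Unset Strict Implicit.
Unset Printing Implicit Defensive.

Import Order.TTheory GRing.Theory Num.Theory.
Local Open Scope ring_scope.

Section Defs.
Variables (R : realType) (A : falgType R).

Definition star_involution (c : A -> A) : Prop :=
  [/\ forall (a : R) (x y : A), c (a *: x + y) = a *: c x + c y,
      forall x, c (c x) = x,
      forall x y, c (x * y) = c y * c x &
      forall a : R, c (a%:A) = a%:A].

Definition SA (c : A -> A) (x : A) : Prop := x + c x = 0 /\ x * c x = 1.

Variable N : nat.
Variable v : 'I_N.+1 -> A.

Definition lincomb (a : 'I_N.+1 -> R) : A := \sum_(s < N.+1) a s *: v s.

Definition inRlm (l m : nat) (x : A) : Prop :=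
  exists a : 'I_N.+1 -> R,
    (forall s : 'I_N.+1, ~~ ((l <= s)%N && (s <= m)%N) -> a s = 0) /\ x = lincomb a.

(* x lies in S_{l,m}, the unit sphere of R_{l,m}, for the Euclidean norm making
   (v_0, ..., v_N) orthonormal *)
Definition inSlm (l m : nat) (x : A) : Prop :=
  exists a : 'I_N.+1 -> R,
    (forall s : 'I_N.+1, ~~ ((l <= s)%N && (s <= m)%N) -> a s = 0) /\
    x = lincomb a /\ \sum_(s < N.+1) a s ^+ 2 = 1.

Definition hypercomplex_basis (c : A -> A) : Prop :=
  (1 <= N)%N /\ v ord0 = 1 /\
  [/\
      (forall s : 'I_N.+1, s != ord0 -> SA c (v s)),
      (forall s t : 'I_N.+1, s != ord0 -> t != ord0 -> s != t ->
          v s * v t = - (v t * v s)),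
      (forall a : 'I_N.+1 -> R, lincomb a = 0 -> forall s, a s = 0) &
      (forall a : 'I_N.+1 -> R, exists J : A, SA c J /\
          exists x y : R, lincomb a = x%:A + y *: J)].

Variable tau : nat.
Variable t : 'I_tau.+1 -> nat.

Definition admissible_T : Prop :=
  (forall i j : 'I_tau.+1, (i < j)%N -> (t i < t j)%N) /\ t ord_max = N.

(* J = (J_1, ..., J_tau) in the torus; index h (1-based in the paper) is
   h : 'I_tau (0-based), so J_h in S_{t_{h-1}+1, t_h} becomes
   J h in S_{t (h) + 1, t (h+1)} *)
Definition in_torus (J : 'I_tau -> A) : Prop :=
  forall h : 'I_tau, inSlm (t (widen_ord (leqnSn tau) h)).+1 (t (lift ord0 h)) (J h).

Definition bJ (beta : 'I_tau -> R) (J : 'I_tau -> A) : A :=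
  \sum_(h < tau) beta h *: J h.

(* J_K = J_{k_1} ... J_{k_p} with k_1 < ... < k_p, J_emptyset = 1 *)
Definition JK (J : 'I_tau -> A) (K : {set 'I_tau}) : A := \prod_(k in K) J k.

Definition conjb (H : {set 'I_tau}) (beta : 'I_tau -> R) : 'I_tau -> R :=
  fun i => if i \in H then - beta i else beta i.

Definition gammaH (J I : 'I_tau -> A) (H : {set 'I_tau}) : A :=
  (2%:R ^- tau : R) *:
    \sum_(K : {set 'I_tau}) (((-1 : R) ^+ #|K :&: H|) *: (JK J K * (JK I K)^-1)).

Definition admissible_D (D : A -> ('I_tau -> R) -> Prop) : Prop :=
  (forall alpha beta, D alpha beta -> inRlm 0 (t ord0) alpha) /\
  (forall alpha beta (h : 'I_tau), D alpha beta -> D alpha (conjb [set h] beta)).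

Definition OmegaD (D : A -> ('I_tau -> R) -> Prop) (x : A) : Prop :=
  exists alpha beta J, D alpha beta /\ in_torus J /\ x = alpha + bJ beta J.

Definition T_stem (D : A -> ('I_tau -> R) -> Prop)
  (F : {set 'I_tau} -> A -> ('I_tau -> R) -> A) : Prop :=
  forall (K : {set 'I_tau}) (h : 'I_tau) alpha beta, D alpha beta ->
    F K alpha (conjb [set h] beta) =
      (if h \in K then - F K alpha beta else F K alpha beta).

(* f : Omega_D -> A (represented as a function A -> A, only its values on
   Omega_D matter) is a T-function *)
Definition T_function (D : A -> ('I_tau -> R) -> Prop) (f : A -> A) : Prop :=
  exists F, T_stem D F /\
    forall alpha beta J, D alpha beta -> in_torus J ->
      f (alpha + bJ beta J) = \sum_(K : {set 'I_tau}) JK J K * F K alpha beta.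

End Defs.

From HB Require Import structures.
From mathcomp Require Import all_boot all_order all_algebra all_field.
From mathcomp Require Import reals.
Import Order.TTheory GRing.Theory Num.Theory.
Local Open Scope ring_scope.

(* The stem function is the Fourier transform over the group (Z/2)^tau of
   H |-> f(alpha + conj^H(beta) I):
     F_K(alpha, beta) = 2^-tau sum_H (-1)^|K cap H| I_K^-1 f(alpha + conj^H(beta) I).
   Flipping beta_h amounts to the reindexing H |-> H xor {h}, which multiplies the
   character (-1)^|K cap H| by -1 exactly when h is in K: this is the stem
   property.  Summing J_K F_K over K and exchanging the two sums gives back the
   representation formula assumed for f; only associativity is used there. *)

Definition toggle {n} (h : 'I_n) (H : {set 'I_n}) : {set 'I_n} :=
  if h \in H then H :\ h else h |: H.

Section Toggle.
Context {n : nat} (h : 'I_n).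

Lemma in_toggle (H : {set 'I_n}) i :
  (i \in toggle h H) = (if i == h then h \notin H else i \in H).
Proof.
rewrite /toggle; case: eqP => [->|/eqP ih].
  by case: ifP => hH; rewrite !inE ?eqxx ?hH.
by case: ifP => hH; rewrite !inE (negbTE ih).
Qed.

Lemma toggleK : involutive (toggle h).
Proof.
move=> H; apply/setP => i; rewrite !in_toggle.
by case: eqP => [->|//]; rewrite eqxx negbK.
Qed.

Lemma sign_toggle (R : pzRingType) (H K : {set 'I_n}) :
  (-1 : R) ^+ #|K :&: toggle h H| = (-1) ^+ (h \in K) * (-1) ^+ #|K :&: H|.
Proof.
rewrite (cardsD1 h (K :&: toggle h H)) (cardsD1 h (K :&: H)).
have -> : (K :&: toggle h H) :\ h = (K :&: H) :\ h.
  by apply/setP => i; rewrite !inE in_toggle; case: eqP; rewrite ?andbF.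
rewrite !inE in_toggle eqxx.
by case: (h \in K); case: (h \in H); rewrite /= ?mul1r ?exprS ?mulN1r ?opprK.
Qed.

Lemma conjb_toggle (R : realType) (H : {set 'I_n}) (beta : 'I_n -> R) :
  conjb H (conjb [set h] beta) =1 conjb (toggle h H) beta.
Proof.
move=> i; rewrite /conjb in_toggle !inE.
by case: eqP => [->|//]; case: (h \in H); rewrite ?opprK.
Qed.

End Toggle.

Section FourierStem.
Context {R : realType} {A : falgType R} {tau : nat} (I : 'I_tau -> A).

Definition fourier_coef (g : {set 'I_tau} -> A) (K : {set 'I_tau}) : A :=
  \sum_(H : {set 'I_tau})
    (((2%:R ^- tau : R) * (-1) ^+ #|K :&: H|) *: ((JK I K)^-1 * g H)).

Lemma sum_JK_fourier_coef (J : 'I_tau -> A) (g : {set 'I_tau} -> A) :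
  \sum_(K : {set 'I_tau}) JK J K * fourier_coef g K =
  \sum_(H : {set 'I_tau}) gammaH J I H * g H.
Proof.
under eq_bigr => K _ do rewrite mulr_sumr.
rewrite exchange_big /=; apply: eq_bigr => H _.
rewrite /gammaH -scalerAl mulr_suml scaler_sumr; apply: eq_bigr => K _.
by rewrite -scalerAl scalerA -[LHS]scalerAr mulrA.
Qed.

Lemma fourier_coef_toggle (g : {set 'I_tau} -> A) (h : 'I_tau) K :
  fourier_coef (g \o toggle h) K = (-1) ^+ (h \in K) *: fourier_coef g K.
Proof.
rewrite /fourier_coef (reindex_inj (can_inj (toggleK h))) scaler_sumr /=.
by apply: eq_bigr => H _; rewrite toggleK sign_toggle scalerA mulrCA.
Qed.

Definition fourier_stem (f : A -> A) (K : {set 'I_tau}) alpha beta : A :=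
  fourier_coef (fun H => f (alpha + bJ (conjb H beta) I)) K.

Lemma fourier_stem_T_stem (D : A -> ('I_tau -> R) -> Prop) (f : A -> A) :
  T_stem D (fourier_stem f).
Proof.
move=> K h alpha beta _.
pose g H := f (alpha + bJ (conjb H beta) I).
have -> : fourier_stem f K alpha (conjb [set h] beta) = fourier_coef (g \o toggle h) K.
  apply: eq_bigr => H _; congr (_ *: (_ * f (_ + _))).
  by apply: eq_bigr => i _; rewrite conjb_toggle.
by rewrite fourier_coef_toggle; case: (h \in K); rewrite ?scaleN1r ?scale1r.
Qed.

End FourierStem.

Theorem proposition2p35 (R : realType) (A : falgType R) (c : A -> A)
  (N : nat) (v : 'I_N.+1 -> A) (tau : nat) (t : 'I_tau.+1 -> nat)
  (D : A -> ('I_tau -> R) -> Prop) (f : A -> A) :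
  star_involution c ->
  (exists x : A, SA c x) ->
  hypercomplex_basis v c ->
  admissible_T N t ->
  admissible_D v t D ->
  (exists I : 'I_tau -> A, in_torus v t I /\
     forall alpha beta (J : 'I_tau -> A), D alpha beta -> in_torus v t J ->
       f (alpha + bJ beta J) =
         \sum_(H : {set 'I_tau}) gammaH J I H * f (alpha + bJ (conjb H beta) I)) ->
  T_function v t D f.
Proof.
move=> _ _ _ _ _ [I [_ f_repr]].
exists (fourier_stem I f); split; first exact: fourier_stem_T_stem.
move=> alpha beta J Dab TJ.
by rewrite f_repr // -sum_JK_fourier_coef.
Qed.
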